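(* If $\delta=x^{\mathbf d}f(\theta)$ is a homogeneous differential operator on $R$ of degree $\mathbf d$ with $-\mathbf d$ in the interior of $\sigma^\vee$, then $\delta$ fixes at most one nonzero monomial ideal of $R$.
   Context: Let $\sigma\subseteq\mathbb R^d$ be a full-dimensional, strongly convex rational polyhedral cone, $S=\sigma^\vee\cap\mathbb Z^d$, $R=\mathbb C[S]$ with monomial basis $x^{\mathbf a}$, $\mathbf a\in S$. Let $h_1,\dots,h_n$ be the primitive support functions of the facets of $\sigma^\vee$. $(g,m)!=\prod_{j=0}^m(g-j)$ for $m\ge0$, $=1$ for $m<0$; $H_{\mathbf d}=\prod_i(h_i,h_i(-\mathbf d)-1)!$. For $f\in\mathbb C[t_1,\dots,t_d]$ divisible by $H_{\mathbf d}$, $\delta=x^{\mathbf d}f(\theta)$ is the $\mathbb C$-linear map $R\to R$ with $\delta(x^{\mathbf a})=f(\mathbf a)x^{\mathbf a+\mathbf d}$. An ideal $I$ is $\delta$-fixed if $\delta(I)=I$. *)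

From HB Require Import structures.
From mathcomp Require Import all_boot all_order all_algebra.
From mathcomp Require Import mpoly.
Set Implicit Arguments. Unset Strict Implicit. Unset Printing Implicit Defensive.
Import Order.TTheory GRing.Theory Num.Theory.
Local Open Scope ring_scope.

(** The lattice Z^n is ['rV[int]_n]; a linear form on Z^n (e.g. a support
    function h_i) is represented by its integer coefficient vector, acting by
    the dot product. *)
Definition zdot (n : nat) (h a : 'rV[int]_n) : int := \sum_(j < n) h 0 j * a 0 j.

Definition qdot (n : nat) (h : 'rV[int]_n) (u : 'rV[rat]_n) : rat :=
  \sum_(j < n) (h 0 j)%:~R * u 0 j.

Definition primitive (n : nat) (v : 'rV[int]_n) : Prop :=
  v != 0 /\ forall (k : int) (w : 'rV[int]_n), v = k *: w -> k = 1 \/ k = -1.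

(** [facet_data h]: h_1..h_k are exactly the primitive support functions of the
    facets of the cone sigma^vee = { u | h_i(u) >= 0 for all i } (the dual of
    sigma = cone(h_1,..,h_k)), where sigma is a full-dimensional strongly convex
    rational polyhedral cone.  Concretely:
    - each h_i is primitive;
    - sigma^vee is full-dimensional (<=> sigma strongly convex);
    - sigma^vee is strongly convex (<=> sigma full-dimensional);
    - each h_i defines a facet of sigma^vee: the hyperplane h_i = 0 meets
      sigma^vee in a set of codimension one, i.e. it contains a point of
      sigma^vee at which all other h_j are strictly positive (this also makes
      the h_i pairwise distinct, i.e. the list of facets is irredundant).
    (Real points may be replaced by rational points since all data are
    rational.) *)
Definition facet_data (n k : nat) (h : 'I_k -> 'rV[int]_n) : Prop :=
  [/\ forall i, primitive (h i),
      exists u : 'rV[rat]_n, forall i, 0 < qdot (h i) u,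
      forall u : 'rV[rat]_n, (forall i, qdot (h i) u = 0) -> u = 0 &
      forall i, exists u : 'rV[rat]_n,
        qdot (h i) u = 0 /\ forall j, j != i -> 0 < qdot (h j) u].

Definition inS (n k : nat) (h : 'I_k -> 'rV[int]_n) (a : 'rV[int]_n) : Prop :=
  forall i, 0 <= zdot (h i) a.

Definition in_interior_dual (n k : nat) (h : 'I_k -> 'rV[int]_n)
  (a : 'rV[int]_n) : Prop :=
  forall i, 0 < zdot (h i) a.

(** ---- The semigroup ring R = C[S] ----
    An element of R is represented by its coefficient function
    Z^n -> C, which must have finite support contained in S; the monomial
    x^a is the indicator function of a. *)
Section Ring.
Variables (C : numClosedFieldType) (n k : nat) (h : 'I_k -> 'rV[int]_n).

Definition elt := 'rV[int]_n -> C.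

Definition inR (p : elt) : Prop :=
  (forall a, p a != 0 -> inS h a) /\
  exists s : seq 'rV[int]_n, forall a, p a != 0 -> a \in s.

Definition monomial (a : 'rV[int]_n) : elt := fun b => if b == a then 1 else 0.

Definition eadd (p q : elt) : elt := fun a => p a + q a.
Definition escale (c : C) (p : elt) : elt := fun a => c * p a.
Definition emulmon (b : 'rV[int]_n) (p : elt) : elt := fun a => p (a - b).

(** An ideal of R.  Since R is spanned over C by the monomials x^b (b in S),
    closure under multiplication by R is the same as closure under C-scaling
    and under multiplication by monomials. *)
Definition ideal (I : elt -> Prop) : Prop :=
  [/\ forall p, I p -> inR p,
      I (fun _ => 0),
      forall p q, I p -> I q -> I (eadd p q),
      forall c p, I p -> I (escale c p) &
      forall b p, inS h b -> I p -> I (emulmon b p)].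

Definition monomial_ideal (I : elt -> Prop) : Prop :=
  ideal I /\
  forall p, I p -> exists s : seq (C * 'rV[int]_n),
     (forall cb, cb \in s -> I (monomial cb.2)) /\
     p = (fun a => \sum_(cb <- s) cb.1 * monomial cb.2 a).

Definition nonzero_ideal (I : elt -> Prop) : Prop :=
  exists p, I p /\ p <> (fun _ => 0).

Definition linpoly (v : 'rV[int]_n) : {mpoly C[n]} :=
  \sum_(j < n) (v 0 j)%:~R *: 'X_j.

Definition ffact (g : {mpoly C[n]}) (m : int) : {mpoly C[n]} :=
  match m with
  | Posz m' => \prod_(j < m'.+1) (g - (j%:R)%:MP)
  | Negz _ => 1
  end.

Definition Hd (d : 'rV[int]_n) : {mpoly C[n]} :=
  \prod_(i < k) ffact (linpoly (h i)) (zdot (h i) (- d) - 1).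

Definition mdivides (g f : {mpoly C[n]}) : Prop := exists q, f = g * q.

Definition evalZ (f : {mpoly C[n]}) (a : 'rV[int]_n) : C :=
  f.@[fun j => (a 0 j)%:~R].

(** delta = x^d f(theta): delta(x^a) = f(a) x^(a+d), extended linearly;
    the coefficient of x^b in delta(p) is f(b - d) * p(b - d). *)
Definition diffop (d : 'rV[int]_n) (f : {mpoly C[n]}) (p : elt) : elt :=
  fun b => evalZ f (b - d) * p (b - d).

Definition delta_fixed (d : 'rV[int]_n) (f : {mpoly C[n]}) (I : elt -> Prop)
  : Prop :=
  forall q, I q <-> exists p, I p /\ q = diffop d f p.

End Ring.

From HB Require Import structures.
From mathcomp Require Import all_boot all_order all_algebra.
From mathcomp Require Import mpoly.
From Stdlib Require Import FunctionalExtensionality.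
From mathcomp Require Import zify.
Import Order.TTheory GRing.Theory Num.Theory.
Local Open Scope ring_scope.
Set Implicit Arguments. Unset Strict Implicit.

(** A delta-fixed monomial ideal [I] is determined by [delta] alone: since
    [-d] is interior, [x^b] lies in [I] iff [b] lies in [S] and
    [f(b - j d) <> 0] for every [j >= 1].  Necessity: [delta(I) = I] lets one
    walk down from [x^b] to [x^(b-d)], and [delta(x^(b-d)) = f(b-d) x^b] must
    be nonzero.  Sufficiency: walking [m] steps down from [b] lands in
    [e + S] for any monomial [x^e] of [I], and then one walks back up by
    applying [delta], whose coefficients [f(b - j d)] are nonzero.  Two nonzero
    monomial ideals with the same monomials coincide. *)

Lemma zdotD (n : nat) (v a b : 'rV[int]_n) : zdot v (a + b) = zdot v a + zdot v b.
Proof. by rewrite /zdot -big_split; apply: eq_bigr => j _; rewrite mxE mulrDr. Qed.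

Lemma zdotMn (n : nat) (v a : 'rV[int]_n) m : zdot v (a *+ m) = zdot v a *+ m.
Proof. by rewrite /zdot -sumrMnl; apply: eq_bigr => j _; rewrite mulmxnE mulrnAr. Qed.

Section Semigroup.
Variables (n k : nat) (h : 'I_k -> 'rV[int]_n).

Lemma inS_add a b : inS h a -> inS h b -> inS h (a + b).
Proof. by move=> Sa Sb i; rewrite zdotD addr_ge0. Qed.

Lemma interior_inS a : in_interior_dual h a -> inS h a.
Proof. by move=> Ia i; apply: ltW. Qed.

(* Each step along an interior [c] raises every [h_i] by at least one, so
   [sum_i |h_i(a)|] steps suffice. *)
Lemma interior_shift_inS a c :
  in_interior_dual h c -> exists m : nat, inS h (a + c *+ m).
Proof.
move=> Ic; exists (\sum_(i < k) `|zdot (h i) a|%N)%N => i.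
rewrite zdotD zdotMn -mulr_natr.
set m := (\sum_(i < k) _)%N.
have le_a_m : - zdot (h i) a <= m%:Z.
  apply: le_trans (ler_norm _) _; rewrite normrN -abszE lez_nat.
  by rewrite /m (bigD1 i) //= leq_addr.
have ge1_c : 1 <= zdot (h i) c by exact: Ic.
have : 0 <= (zdot (h i) c - 1) * m%:Z by apply: mulr_ge0; rewrite ?subr_ge0.
by move: le_a_m; lia.
Qed.

End Semigroup.

Section MonomialsOfIdeals.
Variables (C : numClosedFieldType) (n k : nat) (h : 'I_k -> 'rV[int]_n).
Variable I : elt C n -> Prop.
Hypothesis idealI : ideal h I.

Lemma ideal_monomial_inS b : I (monomial C b) -> inS h b.
Proof.
case: idealI => inRI _ _ _ _ Ib; apply: (inRI _ Ib).1.
by rewrite /monomial eqxx oner_neq0.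
Qed.

Lemma ideal_monomial_shift e c :
  I (monomial C e) -> inS h c -> I (monomial C (e + c)).
Proof.
case: idealI => _ _ _ _ mulI Ie Sc.
have -> : monomial C (e + c) = emulmon c (monomial C e).
  by apply: functional_extensionality => a; rewrite /emulmon /monomial subr_eq.
exact: mulI.
Qed.

Variables (d : 'rV[int]_n) (f : {mpoly C[n]}).
Hypotheses (fixedI : delta_fixed d f I) (interior_d : in_interior_dual h (- d)).

Lemma delta_fixed_monomial_down b :
  I (monomial C b) -> evalZ f (b - d) != 0 /\ I (monomial C (b - d)).
Proof.
move=> Ib; split; last first.
  by apply: ideal_monomial_shift => //; apply: interior_inS.
have [p [_ /(congr1 (fun q => q b))]] := (fixedI _).1 Ib.
rewrite /diffop /monomial eqxx; apply: contra_eq_neq => ->.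
by rewrite mul0r oner_neq0.
Qed.

Lemma delta_fixed_monomial_up a :
  I (monomial C a) -> evalZ f a != 0 -> I (monomial C (a + d)).
Proof.
move=> Ia fa_neq0.
have Idelta : I (diffop d f (monomial C a)) by apply/fixedI; exists (monomial C a).
have -> : monomial C (a + d) = escale (evalZ f a)^-1 (diffop d f (monomial C a)).
  apply: functional_extensionality => b.
  rewrite /escale /diffop /monomial subr_eq.
  case: eqP => [->|_]; last by rewrite !mulr0.
  by rewrite addrK mulr1 mulVf.
by case: idealI => _ _ _ scaleI _; apply: scaleI.
Qed.

Lemma delta_fixed_monomialE e b :
  I (monomial C e) ->
  I (monomial C b) <-> inS h b /\ forall j : nat, evalZ f (b - d *+ j.+1) != 0.
Proof.
move=> Ie; split.
  move=> Ib; split; first exact: ideal_monomial_inS.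
  move=> j; elim: j b Ib => [|j IH] b Ib.
    by rewrite mulr1n; case: (delta_fixed_monomial_down Ib).
  have [_ Ib'] := delta_fixed_monomial_down Ib.
  by rewrite mulrS opprD addrA; apply: IH.
case=> Sb fb_neq0.
have [m Sm] := interior_shift_inS (b - e) interior_d.
have Ibm : I (monomial C (b - d *+ m)).
  have -> : b - d *+ m = e + (b - e + (- d) *+ m) by rewrite addrA subrKC mulNrn.
  exact: ideal_monomial_shift.
elim: m b Sb fb_neq0 Ibm {Sm} => [|m IH] b Sb fb_neq0 Ibm.
  by rewrite subr0 in Ibm.
have Ib' : I (monomial C (b - d)).
  apply: IH.
  - by apply: inS_add => //; apply: interior_inS.
  - by move=> j; rewrite -addrA -opprD -mulrS.
  - by rewrite -addrA -opprD -mulrS.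
rewrite -[b](subrK d); apply: delta_fixed_monomial_up => //.
by have := fb_neq0 0%N; rewrite mulr1n.
Qed.

End MonomialsOfIdeals.

Section MonomialIdeals.
Variables (C : numClosedFieldType) (n k : nat) (h : 'I_k -> 'rV[int]_n).

Lemma monomial_ideal_sub (I J : elt C n -> Prop) :
  monomial_ideal h I -> ideal h J ->
  (forall e, I (monomial C e) -> J (monomial C e)) -> forall p, I p -> J p.
Proof.
case=> _ spanI [_ J0 addJ scaleJ _] IJ p /spanI[s [Is ->]].
elim: s Is => [|cb s IH] Is.
  suff -> : (fun a : 'rV_n => \sum_(cb <- [::]) cb.1 * monomial C cb.2 a) = fun _ => 0 by [].
  by apply: functional_extensionality => a; rewrite big_nil.
have -> : (fun a : 'rV_n => \sum_(cb' <- cb :: s) cb'.1 * monomial C cb'.2 a) =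
    eadd (escale cb.1 (monomial C cb.2))
         (fun a => \sum_(cb' <- s) cb'.1 * monomial C cb'.2 a).
  by apply: functional_extensionality => a; rewrite big_cons.
apply: addJ.
  by apply/scaleJ/IJ/Is/mem_head.
by apply: IH => cb' s_cb'; apply: Is; rewrite in_cons s_cb' orbT.
Qed.

Lemma nonzero_monomial_ideal_has_monomial (I : elt C n -> Prop) :
  monomial_ideal h I -> nonzero_ideal I -> exists e, I (monomial C e).
Proof.
case=> _ spanI [p [/spanI[[|cb s] [Is Ep]] p_neq0]].
  by case: p_neq0; rewrite Ep; apply: functional_extensionality => a; rewrite big_nil.
by exists cb.2; apply/Is/mem_head.
Qed.

End MonomialIdeals.

Unset Implicit Arguments.

Theorem mainTheorem11 (C : numClosedFieldType) (n k : nat)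
  (h : 'I_k -> 'rV[int]_n) (d : 'rV[int]_n) (f : {mpoly C[n]}) :
  facet_data h ->
  mdivides (Hd C h d) f ->
  in_interior_dual h (- d) ->
  forall I J : elt C n -> Prop,
    monomial_ideal h I -> nonzero_ideal I -> delta_fixed d f I ->
    monomial_ideal h J -> nonzero_ideal J -> delta_fixed d f J ->
    forall p, I p <-> J p.
Proof.
(* [H_d | f] is what makes [delta] map [R] into [R]; here [diffop] is defined
   on all coefficient functions, so neither it nor [facet_data] is needed. *)
move=> _ _ interior_d I J MI NI FI MJ NJ FJ.
have [eI Ie] := nonzero_monomial_ideal_has_monomial MI NI.
have [eJ Je] := nonzero_monomial_ideal_has_monomial MJ NJ.
have sameI_J b : I (monomial C b) <-> J (monomial C b).
  by rewrite (delta_fixed_monomialE MI.1 FI interior_d b Ie)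
             (delta_fixed_monomialE MJ.1 FJ interior_d b Je).
move=> p; split.
- by apply: (monomial_ideal_sub MI MJ.1) => e /sameI_J.
- by apply: (monomial_ideal_sub MJ MI.1) => e /sameI_J.
Qed.
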